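(* Consider the switched system $x(t+1)=Ax(t)+\sigma(t)Bu(t)$ with $A\in\mathbb{R}^{n\times n}$ invertible, $B\in\mathbb{R}^{n\times m}$, and switching signal $\sigma$ ranging over the admissible signals $\mathcal{L}(\mathcal{A})$ of a given automaton $\mathcal{A}$. Suppose this system is controllable, fix an initial condition $x(0)\in\mathbb{R}^n$, and suppose the time-optimal control problem below is feasible. For $\sigma\in\mathcal{L}(\mathcal{A})$ let $t_\sigma$ be the optimal (least) time $t$ for which there exists $\bar u=(u(0)^{\mathsf T},\ldots,u(t)^{\mathsf T})^{\mathsf T}$ with $|u_i(j)|\le 1$ for all $i,j$ and $0=A^{t}x(0)+C_{\sigma(t)}(A,B)\bar u$. If $\sigma_1,\sigma_2\in\mathcal{L}(\mathcal{A})$ satisfy $\sigma_1\preceq\sigma_2$, then $t_{\sigma_1}\ge t_{\sigma_2}$.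
   Context: An automaton $\mathcal{A}$ is a directed graph whose edges are labeled by $0$ or $1$; a binary sequence is admissible if it is the succession of labels along some path in the graph, and $\mathcal{L}(\mathcal{A})$ denotes the set of admissible sequences. For a switching signal $\sigma$, $C_{\sigma(t)}(A,B)=\begin{bmatrix}\sigma(0)A^tB & \cdots & \sigma(t-1)AB & \sigma(t)B\end{bmatrix}$. The system is controllable if for every $\sigma\in\mathcal{L}(\mathcal{A})$, every initial state $x_0\in\mathbb{R}^n$ and every final state $x_f\in\mathbb{R}^n$ there is an input $u:\mathbb{N}\to\mathbb{R}^m$ with $x(t_\sigma)=x_f$ for some $t_\sigma\in\mathbb{N}$. Partial order: $\sigma_1\preceq\sigma_2$ if for every $i$ with $\sigma_1(i)=1$ we also have $\sigma_2(i)=1$. *)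

From HB Require Import structures.
From mathcomp Require Import all_boot all_order all_algebra.
Set Implicit Arguments. Unset Strict Implicit. Unset Printing Implicit Defensive.
Import Order.TTheory GRing.Theory Num.Theory.
Local Open Scope ring_scope.

(* An automaton: a finite set of states Q and 0/1-labelled directed edges,
   [edge q b q'] meaning there is an edge from q to q' labelled b. *)
Definition admissible (Q : finType) (edge : Q -> bool -> Q -> bool)
  (sigma : nat -> bool) : Prop :=
  exists q : nat -> Q, forall i : nat, edge (q i) (sigma i) (q i.+1).

Definition sig_le (sigma1 sigma2 : nat -> bool) : Prop :=
  forall i : nat, sigma1 i -> sigma2 i.

Fixpoint traj (R : realFieldType) (n m : nat) (A : 'M[R]_n) (B : 'M[R]_(n, m))
  (sigma : nat -> bool) (u : nat -> 'cV[R]_m) (x0 : 'cV[R]_n) (t : nat)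
  : 'cV[R]_n :=
  match t with
  | 0 => x0
  | t'.+1 => A *m traj A B sigma u x0 t' + (sigma t')%:R *: (B *m u t')
  end.

Definition controllable (R : realFieldType) (n m : nat) (A : 'M[R]_n)
  (B : 'M[R]_(n, m)) (Q : finType) (edge : Q -> bool -> Q -> bool) : Prop :=
  forall sigma, admissible edge sigma ->
  forall x0 xf : 'cV[R]_n,
  exists (u : nat -> 'cV[R]_m) (t : nat), traj A B sigma u x0 t = xf.

Definition Cmx (R : realFieldType) (n m : nat) (A : 'M[R]_n) (B : 'M[R]_(n, m))
  (sigma : nat -> bool) (t : nat) :=
  \mxrow_(j < t.+1) ((sigma j)%:R *: (A ^+ (t - j) *m B)).

Definition ubar (R : realFieldType) (m t : nat) (u : 'I_t.+1 -> 'cV[R]_m) :=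
  \mxcol_(j < t.+1) u j.

Definition feasible_at (R : realFieldType) (n m : nat) (A : 'M[R]_n)
  (B : 'M[R]_(n, m)) (x0 : 'cV[R]_n) (sigma : nat -> bool) (t : nat) : Prop :=
  exists u : 'I_t.+1 -> 'cV[R]_m,
    (forall (j : 'I_t.+1) (i : 'I_m), `|u j i 0| <= 1) /\
    0 = A ^+ t *m x0 + Cmx A B sigma t *m ubar u.

Definition optimal_time (R : realFieldType) (n m : nat) (A : 'M[R]_n)
  (B : 'M[R]_(n, m)) (x0 : 'cV[R]_n) (sigma : nat -> bool) (t : nat) : Prop :=
  feasible_at A B x0 sigma t /\
  (forall t' : nat, (t' < t)%N -> ~ feasible_at A B x0 sigma t').

From HB Require Import structures.
From mathcomp Require Import all_boot all_order all_algebra.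
Set Implicit Arguments. Unset Strict Implicit. Unset Printing Implicit Defensive.
Import Order.TTheory GRing.Theory Num.Theory.
Local Open Scope ring_scope.

(* An admissible input for sigma1 at time t, zeroed at the instants where
   sigma1 is off, is admissible for any sigma2 >= sigma1 at the same time t:
   the active blocks of C_{sigma1(t)} are active in C_{sigma2(t)}, and the
   extra blocks only multiply zero inputs. *)

Section Feasibility.

Variables (R : realFieldType) (n m : nat) (A : 'M[R]_n) (B : 'M[R]_(n, m)).
Variable x0 : 'cV[R]_n.

Lemma feasible_at_sig_le (sigma1 sigma2 : nat -> bool) (t : nat) :
  sig_le sigma1 sigma2 ->
  feasible_at A B x0 sigma1 t -> feasible_at A B x0 sigma2 t.
Proof.
move=> le12 [u [u_bounded reach0]].
exists (fun j : 'I_t.+1 => if sigma1 j then u j else 0); split.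
  by move=> j i; case: (sigma1 j) => //; rewrite mxE normr0 ler01.
rewrite reach0 /Cmx /ubar !mul_mxrow_mxcol; congr (_ + _).
apply: eq_bigr => j _; case s1j: (sigma1 j); first by rewrite (le12 _ s1j).
by rewrite mulmx0 scale0r mul0mx.
Qed.

Lemma optimal_time_min (sigma : nat -> bool) (t t' : nat) :
  optimal_time A B x0 sigma t -> feasible_at A B x0 sigma t' -> (t <= t')%N.
Proof.
by move=> [_ tmin] feas_t'; rewrite leqNgt; apply/negP => /tmin.
Qed.

End Feasibility.

Theorem mainTheorem2 (R : realFieldType) (n m : nat) (A : 'M[R]_n)
  (B : 'M[R]_(n, m)) (Q : finType) (edge : Q -> bool -> Q -> bool)
  (x0 : 'cV[R]_n) :
  A \in unitmx ->
  controllable A B edge ->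
  forall (sigma1 sigma2 : nat -> bool) (t1 t2 : nat),
  admissible edge sigma1 -> admissible edge sigma2 ->
  sig_le sigma1 sigma2 ->
  optimal_time A B x0 sigma1 t1 ->
  optimal_time A B x0 sigma2 t2 ->
  (t2 <= t1)%N.
Proof.
move=> _ _ sigma1 sigma2 t1 t2 _ _ le12 [feas1 _] opt2.
exact: optimal_time_min opt2 (feasible_at_sig_le le12 feas1).
Qed.
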